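(* Let $\mathcal{G}=\{G_1,\ldots,G_m\}$ be a consecutive grouped weight partition of $\mathbb{F}_q^k$, with $G_j=\bigcup_{i\in S_j}W_i$ where each $S_j=\{a_j,a_j+1,\ldots,b_j\}$ is an integer interval, the $S_j$ partition $\{0,\ldots,k\}$, and the blocks are ordered so that $\max S_r<\min S_s$ whenever $r<s$. If $|S_\ell|\ge 2$ for some $\ell\in\{2,\ldots,m-1\}$, then the partition graph of $\mathcal{G}$ contains no clique of size $m$.
   Context: $W_i=\{u\in\mathbb{F}_q^k:\mathrm{wt}(u)=i\}$ (Hamming weight). $d$ is Hamming distance; for distinct blocks $d(P,P')=\min_{u\in P,v\in P'}d(u,v)$. The partition graph $G_{\mathcal{P}}$ of a partition $\mathcal{P}$ of $\mathbb{F}_q^k$ has vertex set $\mathbb{F}_q^k$, and vertices $u\in P$, $v\in P'$ (blocks of $\mathcal{P}$) are adjacent iff $P\ne P'$ and $d(u,v)=d(P,P')$. *)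

From mathcomp Require Import all_boot all_algebra.
Import GRing.Theory.
Set Implicit Arguments. Unset Strict Implicit. Unset Printing Implicit Defensive.

(* Vectors of F_q^k are row vectors 'rV[F]_k over a finite field F (q = #|F|). *)

Definition wt (F : finFieldType) (k : nat) (u : 'rV[F]_k) : nat :=
  #|[set i : 'I_k | u ord0 i != 0%R]|.

Definition hd (F : finFieldType) (k : nat) (u v : 'rV[F]_k) : nat :=
  #|[set i : 'I_k | u ord0 i != v ord0 i]|.

(* d(P,P') = min_{u in P, v in P'} d(u,v).  Since d(u,v) <= k always, using k
   as the neutral element of minn gives the true minimum for nonempty blocks. *)
Definition blockdist (F : finFieldType) (k : nat) (P P' : {set 'rV[F]_k}) : nat :=
  \big[minn/k]_(u in P) \big[minn/k]_(v in P') hd u v.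

Definition pg_adj (F : finFieldType) (k m : nat) (G : 'I_m -> {set 'rV[F]_k})
  (u v : 'rV[F]_k) : Prop :=
  exists r s : 'I_m, [/\ r != s, u \in G r, v \in G s &
                         hd u v = blockdist (G r) (G s)].

Definition pg_clique (F : finFieldType) (k m : nat) (G : 'I_m -> {set 'rV[F]_k})
  (C : {set 'rV[F]_k}) (n : nat) : Prop :=
  #|C| = n /\ forall u v, u \in C -> v \in C -> u != v -> pg_adj G u v.

(* Consecutive grouped weight partition with (0-indexed) blocks
   G_j = union_{a j <= i <= b j} W_i, j = 0..m-1. *)
Definition cgw_block (F : finFieldType) (k m : nat) (a b : nat -> nat)
  (j : 'I_m) : {set 'rV[F]_k} :=
  [set u : 'rV[F]_k | a j <= wt u <= b j].

Definition consecutive_intervals (k m : nat) (a b : nat -> nat) : Prop :=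
  [/\ 0 < m, a 0 = 0, b m.-1 = k,
      forall j, j < m -> a j <= b j &
      forall j, j.+1 < m -> a j.+1 = (b j).+1].

From mathcomp Require Import all_boot all_order all_algebra.
From mathcomp Require Import zify.
Import Order.TTheory.

Set Implicit Arguments.
Unset Strict Implicit.
Unset Printing Implicit Defensive.

(* In a clique of size m every block contains exactly one clique vertex.  If u
   in G_r and v in G_s (r < s) realize the block distance, then u has the largest
   weight b_r of its block and v the smallest weight a_s of its block: otherwise
   copying (resp. erasing) one coordinate where u is zero and v is not stays in
   the block and shortens the distance.  The vertex of the middle block G_l is
   adjacent to those of G_(l-1) and G_(l+1), so its weight is both a_l and b_l,
   which is impossible when |S_l| >= 2. *)

Lemma blockdist_le_hd (F : finFieldType) (k : nat) (P Q : {set 'rV[F]_k}) u v :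
  u \in P -> v \in Q -> blockdist P Q <= hd u v.
Proof.
move=> uP vQ; rewrite /blockdist -!minEnat.
have := bigmin_le_cond k (fun v => hd u v) vQ.
have := bigmin_le_cond k (fun u => \big[Order.min/k]_(v in Q) hd u v) uP.
exact: leq_trans.
Qed.

Section HammingUpdates.

Variables (F : finFieldType) (k : nat).
Implicit Types (x y z : 'rV[F]_k) (i : 'I_k) (c : F).

Definition set_coord x i c : 'rV[F]_k :=
  \row_j (if j == i then c else x ord0 j).

Lemma hd_sym x y : hd x y = hd y x.
Proof. by apply: eq_card => j; rewrite !inE eq_sym. Qed.

Lemma wt_hd0 x : wt x = hd x 0%R.
Proof. by apply: eq_card => j; rewrite !inE mxE. Qed.

Lemma hd_set_coord x i c z :
  hd (set_coord x i c) z + (x ord0 i != z ord0 i) = hd x z + (c != z ord0 i).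
Proof.
rewrite /hd (cardsD1 i [set j | _ != _]) [in RHS](cardsD1 i [set j | _ != _]).
rewrite !inE mxE eqxx.
have -> : [set j | set_coord x i c ord0 j != z ord0 j] :\ i =
          [set j | x ord0 j != z ord0 j] :\ i.
  by apply/setP => j; rewrite !inE mxE; case: eqVneq.
lia.
Qed.

Lemma wt_ltn_zero_nonzero x y :
  wt x < wt y -> exists i, x ord0 i = 0%R /\ y ord0 i != 0%R.
Proof.
move=> lt_xy.
have : ~~ ([set j | y ord0 j != 0%R] \subset [set j | x ord0 j != 0%R]).
  by apply: contraTN lt_xy => /subset_leq_card; rewrite -leqNgt.
by case/subsetPn => i; rewrite !inE negbK => yi /eqP xi; exists i.
Qed.

Lemma wt_step_up x y :
  wt x < wt y -> exists2 u, wt u = (wt x).+1 & hd u y < hd x y.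
Proof.
case/wt_ltn_zero_nonzero => i [xi yi]; exists (set_coord x i (y ord0 i)).
  by have := hd_set_coord x i (y ord0 i) 0%R; rewrite -!wt_hd0 mxE xi eqxx yi; lia.
have := hd_set_coord x i (y ord0 i) y; rewrite xi eq_sym yi eqxx; lia.
Qed.

Lemma wt_step_down x y :
  wt x < wt y -> exists2 v, (wt v).+1 = wt y & hd x v < hd x y.
Proof.
case/wt_ltn_zero_nonzero => i [xi yi]; exists (set_coord y i 0%R).
  by have := hd_set_coord y i 0%R 0%R; rewrite -!wt_hd0 mxE yi eqxx; lia.
have := hd_set_coord y i 0%R x; rewrite xi yi eqxx (hd_sym x) (hd_sym x); lia.
Qed.

End HammingUpdates.

Section PartitionCliques.

Variables (F : finFieldType) (k m : nat) (G : 'I_m -> {set 'rV[F]_k}).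
Hypothesis G_uniq : forall r s u, u \in G r -> u \in G s -> r = s.

Lemma pg_adj_blocks u v (r s : 'I_m) :
  u \in G r -> v \in G s -> pg_adj G u v ->
  r != s /\ hd u v = blockdist (G r) (G s).
Proof.
by move=> ur vs [r' [s' [rs' ur' vs' E]]]; rewrite (G_uniq ur ur') (G_uniq vs vs').
Qed.

Lemma pg_clique_meets_blocks C :
  1 < m -> pg_clique G C m -> forall j, exists2 u, u \in C & u \in G j.
Proof.
move=> m_gt1 [cardC adjC] j.
have C_covered u : u \in C -> exists r, u \in G r.
  move=> uC; have /card_gt0P[v] : 0 < #|C :\ u| by rewrite (cardsD1 u) uC in cardC; lia.
  rewrite !inE => /andP[vu vC].
  by have [_ [s [_ _ us _]]] := adjC v u vC uC vu; exists s.
pose f u := odflt j [pick r | u \in G r].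
have f_block u : u \in C -> u \in G (f u).
  move=> /C_covered[r ur]; rewrite /f; case: pickP => [r' //|/(_ r)].
  by rewrite /= ur.
have f_inj : {in C &, injective f}.
  move=> u v uC vC fuv; apply/eqP/negPn/negP => uv.
  have [] := pg_adj_blocks (f_block u uC) (f_block v vC) (adjC u v uC vC uv).
  by rewrite fuv eqxx.
have /eqP f_onto : f @: C == [set: 'I_m].
  by rewrite eqEcard subsetT cardsT card_ord (card_in_imset f_inj) cardC leqnn.
have /imsetP[u uC ->] : j \in f @: C by rewrite f_onto inE.
by exists u; last exact: f_block.
Qed.

End PartitionCliques.

Section ConsecutiveGroupedWeights.

Variables (F : finFieldType) (k m : nat) (a b : nat -> nat).
Hypothesis intervals : consecutive_intervals k m a b.

Local Notation G := (@cgw_block F k m a b).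

Lemma consecutive_intervals_lt i j : i < j -> j < m -> b i < a j.
Proof.
have [_ _ _ a_le_b a_next] := intervals.
elim: j => [//|j IH] ij jm; rewrite a_next //.
have [lt_ij|gt_ij|-> //] := ltngtP i j; last lia.
by have := IH lt_ij (ltnW jm); have := a_le_b j (ltnW jm); lia.
Qed.

Lemma cgw_block_uniq (r s : 'I_m) u : u \in G r -> u \in G s -> r = s.
Proof.
rewrite !inE => /andP[lo_r hi_r] /andP[lo_s hi_s]; apply: val_inj => /=.
have [lt|lt|//] := ltngtP r s.
- by have := consecutive_intervals_lt lt (ltn_ord s); lia.
- by have := consecutive_intervals_lt lt (ltn_ord r); lia.
Qed.

Lemma cgw_nearest_wt (r s : 'I_m) x y :
  b r < a s -> x \in G r -> y \in G s -> hd x y = blockdist (G r) (G s) ->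
  wt x = b r /\ wt y = a s.
Proof.
move=> br_as xr ys E; move: (xr) (ys); rewrite !inE => /andP[ax xb] /andP[ay yb].
have lt_xy : wt x < wt y by lia.
split; apply/eqP; rewrite eqn_leq ?xb ?ay // leqNgt; apply/negP => lt.
- have [u wu hu] := wt_step_up lt_xy.
  have ur : u \in G r by rewrite inE wu; lia.
  by have := blockdist_le_hd ur ys; lia.
- have [v wv hv] := wt_step_down lt_xy.
  have vs : v \in G s by rewrite inE; lia.
  by have := blockdist_le_hd xr vs; lia.
Qed.

Lemma cgw_clique_consecutive_wt C n (r s : 'I_m) u v :
  pg_clique G C n -> u \in C -> v \in C -> u \in G r -> v \in G s ->
  s = r.+1 :> nat -> wt u = b r /\ wt v = a s.
Proof.
move=> [_ adjC] uC vC ur vs sr.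
have uv : u != v.
  apply/eqP => euv; move: vs; rewrite -euv => /(cgw_block_uniq ur) rs.
  by move: sr; rewrite rs; lia.
have [_ E] := pg_adj_blocks cgw_block_uniq ur vs (adjC u v uC vC uv).
have [_ _ _ _ a_next] := intervals.
by apply: cgw_nearest_wt E => //; rewrite sr a_next // -sr.
Qed.

End ConsecutiveGroupedWeights.

Theorem lemma9 (F : finFieldType) (k m : nat) (a b : nat -> nat) :
  consecutive_intervals k m a b ->
  (exists l, 0 < l < m.-1 /\ 2 <= (b l).+1 - a l) ->
  ~ exists C : {set 'rV[F]_k}, pg_clique (@cgw_block F k m a b) C m.
Proof.
move=> intervals [l [/andP[l_gt0 l_lt] l_wide]] [C clique].
have l_succ_lt : l.+1 < m by lia.
have l_lt_m := ltnW l_succ_lt.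
have meets := pg_clique_meets_blocks (cgw_block_uniq intervals)
                (leq_ltn_trans l_gt0 l_lt_m) clique.
have [x xC xG] := meets (Ordinal (leq_ltn_trans (leq_pred l) l_lt_m)).
have [y yC yG] := meets (Ordinal l_lt_m).
have [z zC zG] := meets (Ordinal l_succ_lt).
have [_ wy_a] := cgw_clique_consecutive_wt intervals clique xC yC xG yG
                   (esym (prednK l_gt0)).
have [wy_b _] := cgw_clique_consecutive_wt intervals clique yC zC yG zG erefl.
by move: l_wide; rewrite /= -wy_a -wy_b subSn // subnn.
Qed.
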